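(* Under the standing assumptions (in which the $\sigma_l$ are only required to be left- and right-differentiable), with $\lambda>0$, $1\le p<\infty$ and $\Omega\in\{\Omega_{in},\Omega_{out}\}$, for every $B\in\mathbb{R}$ the set of dimension tuples $\mathbf{d}=(d_1,\dots,d_{L-1})$ for which there exists a proper $B$-local minimum $(\mathbf{d},\mathbf{W})$ of $E$ is bounded.
   Context: Network: for dimensions $d_0,\dots,d_L$ and weights $\mathbf{W}=(W_1,\dots,W_L)$, $W_l\in\mathbb{R}^{d_{l-1}\times d_l}$, define for a row vector $x\in\mathbb{R}^{d_0}$: $x_0=x$, $z_l=x_{l-1}W_l$, $x_l=\sigma_l.(z_l)$ (elementwise), $f(\mathbf{W},x)=x_L$; $d_0,d_L$ are fixed and $d_1,\dots,d_{L-1}$ vary. $E(\mathbf{d},\mathbf{W})=\frac{1}{|D|}\sum_{(x,y)\in D}e(f(\mathbf{W},x),y)+\Omega(\mathbf{W},\lambda,p)$ with $D$ a finite dataset of pairs $(x,y)$, $x\in\mathbb{R}^{d_0}$, $y\in Y$. $\Omega_{in}(\mathbf{W},\lambda,p)=\lambda\sum_{l=1}^L\sum_{j=1}^{d_l}\|(W_l(i,j))_{i}\|_p$, $\Omega_{out}(\mathbf{W},\lambda,p)=\lambda\sum_{l=1}^L\sum_{i=1}^{d_{l-1}}\|(W_l(i,j))_{j}\|_p$. Standing assumptions: each $\sigma_l$ is left- and right-differentiable everywhere, and there are functions $b_{1,l},b_{2,l}:\mathbb{R}_{\ge0}\to\mathbb{R}_{\ge0}$ with $|\sigma_l(s)|\le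 b_{1,l}(S)|s|$ and $|\sigma_l^{\leftarrow}(s)|,|\sigma_l^{\rightarrow}(s)|\le b_{2,l}(S)$ whenever $|s|\le S$; $e$ is nonnegative, differentiable in its first argument, and there is $b_3$ with $e(v,y)\le S\Rightarrow\|\partial e(v,y)/\partial v\|_\infty\le b_3(S)$. Definitions: The fan-in of hidden unit $j$ in layer $l$ ($1\le l\le L-1$) is column $j$ of $W_l$; its fan-out is row $j$ of $W_{l+1}$. A pair $(\mathbf{d},\mathbf{W})$ is a local minimum of $E$ if $\mathbf{W}$ is a local minimum of $E(\mathbf{d},\cdot)$ with $\mathbf{d}$ fixed; it is $B$-locally minimal if moreover $E(\mathbf{d},\mathbf{W})\le B$. The proper dimensionality of $\mathbf{W}$ is the dimension tuple obtained by deleting all hidden units whose fan-in or fan-out (or both) is the zero vector; $(\mathbf{d},\mathbf{W})$ is proper if $\mathbf{d}$ equals the proper dimensionality of $\mathbf{W}$. A proper $B$-local minimum is a $B$-locally minimal local minimum that is proper. *)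

From Stdlib Require Import Reals List Arith.
Import ListNotations.
Open Scope R_scope.

(* Vectors in R^n are represented by functions nat -> R, of which only the
   entries of index < n are meaningful. *)

Fixpoint rsum (n : nat) (f : nat -> R) : R :=
  match n with
  | O => 0
  | S k => rsum k f + f k
  end.

(* x^p for x >= 0 and real p > 0, with the convention 0^p = 0 *)
Definition rpow (x p : R) : R :=
  if Rlt_dec 0 x then Rpower x p else 0.

Definition pnorm (p : R) (n : nat) (v : nat -> R) : R :=
  rpow (rsum n (fun i => rpow (Rabs (v i)) p)) (/ p).

Definition right_deriv (f : R -> R) (s D : R) : Prop :=
  forall eps, 0 < eps -> exists delta, 0 < delta /\
    forall h, 0 < h < delta -> Rabs ((f (s + h) - f s) / h - D) < eps.

Definition left_deriv (f : R -> R) (s D : R) : Prop :=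
  forall eps, 0 < eps -> exists delta, 0 < delta /\
    forall h, - delta < h < 0 -> Rabs ((f (s + h) - f s) / h - D) < eps.

(* v represents an element of R^n (entries of index >= n vanish) *)
Definition padded (n : nat) (v : nat -> R) : Prop :=
  forall i, (n <= i)%nat -> v i = 0.

Definition is_grad {Y : Type} (n : nat) (e : (nat -> R) -> Y -> R)
    (y : Y) (v g : nat -> R) : Prop :=
  forall eps, 0 < eps -> exists delta, 0 < delta /\
    forall h, padded n h -> (forall i, (i < n)%nat -> Rabs (h i) < delta) ->
      Rabs (e (fun i => v i + h i) y - e v y - rsum n (fun i => g i * h i))
        <= eps * rsum n (fun i => Rabs (h i)).

(* Network: d l = d_l (d 0 = d_0, d L = d_L), W l i j = W_l(i,j) for
   1 <= l <= L, i < d (l-1), j < d l (0-indexed units), sigma l = sigma_l. *)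
Fixpoint layer (d : nat -> nat) (sigma : nat -> R -> R)
    (W : nat -> nat -> nat -> R) (x : nat -> R) (l : nat) : nat -> R :=
  match l with
  | O => x
  | S k => fun j =>
      sigma (S k) (rsum (d k) (fun i => layer d sigma W x k i * W (S k) i j))
  end.

Definition net (L : nat) (d : nat -> nat) (sigma : nat -> R -> R)
    (W : nat -> nat -> nat -> R) (x : nat -> R) : nat -> R :=
  fun j => if Nat.ltb j (d L) then layer d sigma W x L j else 0.

Inductive reg_kind := Reg_in | Reg_out.

Definition lsum (L : nat) (F : nat -> R) : R := rsum L (fun k => F (S k)).

Definition Omega (k : reg_kind) (L : nat) (d : nat -> nat)
    (W : nat -> nat -> nat -> R) (lam p : R) : R :=
  match k with
  | Reg_in => lam * lsum L (fun l =>
      rsum (d l) (fun j => pnorm p (d (pred l)) (fun i => W l i j)))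
  | Reg_out => lam * lsum L (fun l =>
      rsum (d (pred l)) (fun i => pnorm p (d l) (fun j => W l i j)))
  end.

Definition Eobj {Y : Type} (k : reg_kind) (L : nat) (sigma : nat -> R -> R)
    (e : (nat -> R) -> Y -> R) (D : list ((nat -> R) * Y)) (lam p : R)
    (d : nat -> nat) (W : nat -> nat -> nat -> R) : R :=
  fold_right Rplus 0 (map (fun xy => e (net L d sigma W (fst xy)) (snd xy)) D)
    / INR (length D)
  + Omega k L d W lam p.

Definition local_min {Y : Type} (k : reg_kind) (L : nat) (sigma : nat -> R -> R)
    (e : (nat -> R) -> Y -> R) (D : list ((nat -> R) * Y)) (lam p : R)
    (d : nat -> nat) (W : nat -> nat -> nat -> R) : Prop :=
  exists eps, 0 < eps /\
    forall W' : nat -> nat -> nat -> R,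
      (forall l i j, (1 <= l <= L)%nat -> (i < d (pred l))%nat -> (j < d l)%nat ->
         Rabs (W' l i j - W l i j) < eps) ->
      Eobj k L sigma e D lam p d W <= Eobj k L sigma e D lam p d W'.

Fixpoint nonzero_vec (n : nat) (v : nat -> R) : bool :=
  match n with
  | O => false
  | S k => orb (nonzero_vec k v) (if Req_EM_T (v k) 0 then false else true)
  end.

Fixpoint countb (n : nat) (P : nat -> bool) : nat :=
  match n with
  | O => O
  | S k => (countb k P + (if P k then 1 else 0))%nat
  end.

(* proper dimensionality of W: hidden unit j of layer l (1 <= l <= L-1) is
   kept iff its fan-in (column j of W_l) and its fan-out (row j of W_{l+1})
   are both nonzero; d_0 and d_L are unchanged. *)
Definition proper_dim (L : nat) (d : nat -> nat) (W : nat -> nat -> nat -> R)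
    (l : nat) : nat :=
  if andb (Nat.ltb 0 l) (Nat.ltb l L) then
    countb (d l) (fun j =>
      andb (nonzero_vec (d (pred l)) (fun i => W l i j))
           (nonzero_vec (d (S l)) (fun k => W (S l) j k)))
  else d l.

Definition proper (L : nat) (d : nat -> nat) (W : nat -> nat -> nat -> R) : Prop :=
  forall l, (l <= L)%nat -> proper_dim L d W l = d l.

Definition proper_B_local_min {Y : Type} (k : reg_kind) (L : nat)
    (sigma : nat -> R -> R) (e : (nat -> R) -> Y -> R)
    (D : list ((nat -> R) * Y)) (lam p B : R)
    (d : nat -> nat) (W : nat -> nat -> nat -> R) : Prop :=
  local_min k L sigma e D lam p d W /\
  Eobj k L sigma e D lam p d W <= B /\
  proper L d W.

(* At a proper local minimum every hidden unit is live: its fan-in and fan-out are both nonzero.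
   Shrinking the fan-in (for Omega_in) or the fan-out (for Omega_out) of a unit by the factor
   [1 - t] lowers the regulariser by [lam t P], with [P > 0] the p-norm of the shrunk vector.
   Because [E <= B] bounds all weights, hence all activations, and the one-sided derivatives of
   the [sigma_l] then bound their Lipschitz constants, the output of the network moves by at most
   [t K P r], where [r] is the l1-norm of the other side of the unit and [K] depends only on the
   data, [B] and [lam]. Local minimality therefore gives [r >= lam / ((b3 + 1) K + 1)] for every
   hidden unit. As the p-norms of the fan-ins of layer [l+1] (resp. fan-outs of layer [l-1]) sum
   to at most [|B| / lam], counting bounds [d_l] in terms of [d_(l+1)] (resp. [d_(l-1)]), and
   induction from [d_L] (resp. [d_0]) bounds every hidden dimension. *)

From Stdlib Require Import Reals List Lra Lia Psatz FunctionalExtensionality Classical.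
Open Scope R_scope.

Lemma rsum_ext n f g : (forall i, (i < n)%nat -> f i = g i) -> rsum n f = rsum n g.
Proof.
  induction n as [|n IH]; intros H; simpl; auto.
  rewrite IH by (intros; apply H; lia); rewrite H by lia; reflexivity.
Qed.

Lemma rsum_le n f g : (forall i, (i < n)%nat -> f i <= g i) -> rsum n f <= rsum n g.
Proof.
  induction n as [|n IH]; intros H; simpl; [lra|].
  pose proof (H n ltac:(lia)); pose proof (IH ltac:(intros; apply H; lia)); lra.
Qed.

Lemma rsum_zero n : rsum n (fun _ => 0) = 0.
Proof. induction n as [|n IH]; simpl; [|rewrite IH]; ring. Qed.

Lemma rsum_nonneg n f : (forall i, (i < n)%nat -> 0 <= f i) -> 0 <= rsum n f.
Proof. intros H; rewrite <- (rsum_zero n); now apply rsum_le. Qed.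

Lemma rsum_plus n f g : rsum n (fun i => f i + g i) = rsum n f + rsum n g.
Proof. induction n as [|n IH]; simpl; [|rewrite IH]; ring. Qed.

Lemma rsum_minus n f g : rsum n (fun i => f i - g i) = rsum n f - rsum n g.
Proof. induction n as [|n IH]; simpl; [|rewrite IH]; ring. Qed.

Lemma rsum_scal_l n c f : rsum n (fun i => c * f i) = c * rsum n f.
Proof. induction n as [|n IH]; simpl; [|rewrite IH]; ring. Qed.

Lemma rsum_scal_r n c f : rsum n (fun i => f i * c) = rsum n f * c.
Proof. induction n as [|n IH]; simpl; [|rewrite IH]; ring. Qed.

Lemma rsum_const n c : rsum n (fun _ => c) = INR n * c.
Proof. induction n as [|n IH]; simpl rsum; [simpl|rewrite IH, S_INR]; ring. Qed.

Lemma rsum_abs n f : Rabs (rsum n f) <= rsum n (fun i => Rabs (f i)).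
Proof.
  induction n as [|n IH]; simpl; [rewrite Rabs_R0; lra|].
  eapply Rle_trans; [apply Rabs_triang | lra].
Qed.

Lemma rsum_term_le n f j :
  (j < n)%nat -> (forall i, (i < n)%nat -> 0 <= f i) -> f j <= rsum n f.
Proof.
  induction n as [|n IH]; intros Hj H; [lia|]; simpl.
  assert (Hrest : 0 <= rsum n f) by (apply rsum_nonneg; intros; apply H; lia).
  destruct (Nat.eq_dec j n) as [->|Hne]; [lra|].
  pose proof (IH ltac:(lia) ltac:(intros; apply H; lia)); pose proof (H n ltac:(lia)); lra.
Qed.

Lemma rsum_swap n m (f : nat -> nat -> R) :
  rsum n (fun i => rsum m (fun j => f i j)) = rsum m (fun j => rsum n (fun i => f i j)).
Proof.
  induction n as [|n IH]; simpl; [now rewrite rsum_zero|].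
  now rewrite IH, <- rsum_plus.
Qed.

Lemma rsum_single n f j :
  (j < n)%nat -> (forall i, (i < n)%nat -> i <> j -> f i = 0) -> rsum n f = f j.
Proof.
  induction n as [|n IH]; intros Hj H; [lia|]; simpl.
  destruct (Nat.eq_dec j n) as [->|Hne].
  - rewrite (rsum_ext n f (fun _ => 0)), rsum_zero by (intros; apply H; lia); ring.
  - rewrite IH, (H n) by (auto; lia); ring.
Qed.

Lemma rsum_update n f g j :
  (j < n)%nat -> (forall i, (i < n)%nat -> i <> j -> f i = g i) ->
  rsum n g = rsum n f + (g j - f j).
Proof.
  intros Hj H.
  assert (Hd : rsum n (fun i => g i - f i) = g j - f j).
  { apply (rsum_single n (fun i => g i - f i)); auto.
    intros i Hi Hne; rewrite H; auto; ring. }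
  rewrite rsum_minus in Hd; lra.
Qed.

Lemma rsum_exists_ge_avg n f c :
  0 < c -> c <= rsum n f -> exists i, (i < n)%nat /\ c / INR n <= f i.
Proof.
  intros Hc Hs.
  destruct (Nat.eq_dec n 0) as [->|Hn]; [simpl in Hs; lra|].
  assert (HnR : 0 < INR n) by (apply lt_0_INR; lia).
  apply NNPP; intros Hno.
  assert (Hlt : rsum n f < rsum n (fun _ => c / INR n)).
  { destruct n as [|n]; [lia|]. cbn [rsum].
    assert (Hall : forall i, (i < S n)%nat -> f i < c / INR (S n)).
    { intros i Hi; apply Rnot_le_lt; intros Hge; apply Hno; eauto. }
    pose proof (rsum_le n f (fun _ => c / INR (S n)) ltac:(intros; left; apply Hall; lia)).
    pose proof (Hall n ltac:(lia)); lra. }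
  rewrite rsum_const in Hlt; field_simplify in Hlt; lra.
Qed.

Lemma rpow_nonneg x q : 0 <= rpow x q.
Proof. unfold rpow; destruct (Rlt_dec 0 x); [left; apply exp_pos | lra]. Qed.

Lemma rpow_pos x q : 0 < x -> 0 < rpow x q.
Proof. intros; unfold rpow; destruct (Rlt_dec 0 x); [apply exp_pos | lra]. Qed.

Lemma rpow_le x y q : 0 <= x <= y -> 0 < q -> rpow x q <= rpow y q.
Proof.
  intros; unfold rpow; destruct (Rlt_dec 0 x), (Rlt_dec 0 y).
  - apply Rle_Rpower_l; lra.
  - lra.
  - left; apply exp_pos.
  - lra.
Qed.

Lemma rpow_rpow_inv x q : 0 <= x -> q <> 0 -> rpow (rpow x q) (/ q) = x.
Proof.
  intros Hx Hq; unfold rpow at 2; destruct (Rlt_dec 0 x).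
  - unfold rpow; destruct (Rlt_dec 0 (Rpower x q)) as [_|Hn].
    + rewrite Rpower_mult, Rinv_r, Rpower_1; auto.
    + exfalso; apply Hn, exp_pos.
  - unfold rpow; destruct (Rlt_dec 0 0); lra.
Qed.

Lemma rpow_inv_rpow x q : 0 <= x -> q <> 0 -> rpow (rpow x (/ q)) q = x.
Proof.
  intros; rewrite <- (Rinv_inv q) at 2.
  apply rpow_rpow_inv; auto; now apply Rinv_neq_0_compat.
Qed.

Lemma rpow_mult a b q : 0 <= a -> 0 <= b -> rpow (a * b) q = rpow a q * rpow b q.
Proof.
  intros; unfold rpow.
  destruct (Rlt_dec 0 a), (Rlt_dec 0 b), (Rlt_dec 0 (a * b)); try ring; try nra.
  now rewrite Rpower_mult_distr.
Qed.

Lemma pnorm_nonneg p n v : 0 <= pnorm p n v.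
Proof. apply rpow_nonneg. Qed.

Lemma pnorm_ext p n v w : (forall i, (i < n)%nat -> v i = w i) -> pnorm p n v = pnorm p n w.
Proof. intros H; unfold pnorm; f_equal; apply rsum_ext; intros; now rewrite H. Qed.

Lemma pnorm_rpow p n v : 1 <= p -> rpow (pnorm p n v) p = rsum n (fun i => rpow (Rabs (v i)) p).
Proof.
  intros; apply rpow_inv_rpow; [apply rsum_nonneg; intros; apply rpow_nonneg | lra].
Qed.

Lemma Rabs_le_pnorm p n v i : 1 <= p -> (i < n)%nat -> Rabs (v i) <= pnorm p n v.
Proof.
  intros Hp Hi; unfold pnorm.
  rewrite <- (rpow_rpow_inv (Rabs (v i)) p) by (apply Rabs_pos || lra).
  apply rpow_le; [split; [apply rpow_nonneg|] | apply Rinv_0_lt_compat; lra].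
  apply (rsum_term_le n (fun i => rpow (Rabs (v i)) p)); auto; intros; apply rpow_nonneg.
Qed.

Lemma pnorm_scal p n c v :
  1 <= p -> 0 <= c -> pnorm p n (fun i => c * v i) = c * pnorm p n v.
Proof.
  intros Hp Hc; unfold pnorm.
  rewrite (rsum_ext n _ (fun i => rpow c p * rpow (Rabs (v i)) p)).
  - rewrite rsum_scal_l, rpow_mult, rpow_rpow_inv; auto; try lra.
    + apply rpow_nonneg.
    + apply rsum_nonneg; intros; apply rpow_nonneg.
  - intros; rewrite Rabs_mult, (Rabs_pos_eq c Hc); apply rpow_mult; auto; apply Rabs_pos.
Qed.

Lemma nonzero_vecP n v : nonzero_vec n v = true -> exists i, (i < n)%nat /\ v i <> 0.
Proof.
  induction n as [|n IH]; simpl; intros H; [discriminate|].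
  apply Bool.orb_true_iff in H as [H|H].
  - destruct (IH H) as (i & Hi & Hv); exists i; split; auto; lia.
  - destruct (Req_EM_T (v n) 0); [discriminate|]; exists n; split; auto.
Qed.

Lemma pnorm_pos p n v : 1 <= p -> nonzero_vec n v = true -> 0 < pnorm p n v.
Proof.
  intros Hp H; destruct (nonzero_vecP n v H) as (i & Hi & Hv).
  pose proof (Rabs_le_pnorm p n v i Hp Hi); pose proof (Rabs_pos_lt _ Hv); lra.
Qed.

Lemma countb_full n P : countb n P = n -> forall j, (j < n)%nat -> P j = true.
Proof.
  assert (Hle : forall m, (countb m P <= m)%nat)
    by (induction m; simpl; [|destruct (P m)]; lia).
  induction n as [|n IH]; simpl; intros H j Hj; [lia|].
  pose proof (Hle n); destruct (P n) eqn:E; [|lia].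
  destruct (Nat.eq_dec j n) as [->|]; auto; apply IH; lia.
Qed.

(* Each column has an entry of size at least [c / n]; summing [|a i j|^p] over columns and over
   rows then compares [m] with [n]. *)
Lemma columns_count_bound m n (a : nat -> nat -> R) c Cb p r :
  1 <= p -> 0 < c -> INR n <= r ->
  (forall j, (j < m)%nat -> c <= rsum n (fun i => Rabs (a i j))) ->
  (forall i, (i < n)%nat -> pnorm p m (fun j => a i j) <= Cb) ->
  INR m <= r * rpow Cb p / rpow (c / (r + 1)) p.
Proof.
  intros Hp Hc Hn Hcol Hrow.
  assert (Hr : 0 <= r) by (pose proof (pos_INR n); lra).
  assert (Hpos : 0 < rpow (c / (r + 1)) p) by (apply rpow_pos, Rdiv_lt_0_compat; lra).
  apply Rmult_le_reg_r with (rpow (c / (r + 1)) p); auto.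
  unfold Rdiv; rewrite Rmult_assoc, Rinv_l, Rmult_1_r by lra.
  destruct (Nat.eq_dec n 0) as [->|Hn0].
  { destruct m as [|m]; [simpl; rewrite Rmult_0_l; apply Rmult_le_pos; auto; apply rpow_nonneg|].
    specialize (Hcol 0%nat ltac:(lia)); simpl in Hcol; lra. }
  assert (HnR : 0 < INR n) by (apply lt_0_INR; lia).
  rewrite <- rsum_const.
  apply Rle_trans with (rsum m (fun j => rsum n (fun i => rpow (Rabs (a i j)) p))).
  { apply rsum_le; intros j Hj.
    destruct (rsum_exists_ge_avg n _ c Hc (Hcol j Hj)) as (i & Hi & Hai).
    assert (Hcr : c / (r + 1) <= c / INR n)
      by (apply Rmult_le_compat_l; [lra | apply Rinv_le_contravar; lra]).
    apply Rle_trans with (rpow (Rabs (a i j)) p).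
    - apply rpow_le; [split; [apply Rlt_le, Rdiv_lt_0_compat|]|]; lra.
    - apply (rsum_term_le n (fun i => rpow (Rabs (a i j)) p)); auto; intros; apply rpow_nonneg. }
  rewrite <- rsum_swap.
  apply Rle_trans with (INR n * rpow Cb p).
  - rewrite <- rsum_const; apply rsum_le; intros i Hi; rewrite <- pnorm_rpow by auto.
    apply rpow_le; [split; [apply pnorm_nonneg | auto] | lra].
  - apply Rmult_le_compat_r; auto; apply rpow_nonneg.
Qed.

Fixpoint iter_bound (r0 : R) (g : nat -> R -> R) (k : nat) : R :=
  match k with O => r0 | S k => g k (iter_bound r0 g k) end.

Lemma nat_seq_bounded_of_steps K r0 (g : nat -> R -> R) :
  exists M : nat, forall a : nat -> nat, INR (a 0%nat) <= r0 ->
    (forall k r, (S k < K)%nat -> INR (a k) <= r -> INR (a (S k)) <= g k r) ->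
    forall k, (k < K)%nat -> (a k <= M)%nat.
Proof.
  set (T := rsum K (fun k => Rabs (iter_bound r0 g k))).
  destruct (INR_archimed 1 T ltac:(lra)) as [M HM].
  exists M; intros a H0 Hstep k Hk.
  assert (Ha : forall j, (j < K)%nat -> INR (a j) <= iter_bound r0 g j).
  { intros j; induction j as [|j IH]; intros Hj; simpl; auto; apply Hstep; auto; apply IH; lia. }
  apply INR_le; eapply Rle_trans; [apply Ha, Hk|].
  eapply Rle_trans; [apply Rle_abs|].
  apply Rle_trans with T; [|lra].
  apply (rsum_term_le K (fun k => Rabs (iter_bound r0 g k))); auto; intros; apply Rabs_pos.
Qed.

Lemma Rabs_le_of_quotient u h D eps :
  h <> 0 -> Rabs (u / h - D) < eps -> Rabs u <= (Rabs D + eps) * Rabs h.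
Proof.
  intros Hh Hq.
  replace u with ((u / h - D + D) * h) at 1 by (field; auto).
  rewrite Rabs_mult; apply Rmult_le_compat_r; [apply Rabs_pos|].
  eapply Rle_trans; [apply Rabs_triang | lra].
Qed.

Lemma left_deriv_local_lip f s D :
  left_deriv f s D -> exists delta, 0 < delta /\
    forall h, 0 < h < delta -> Rabs (f (s - h) - f s) <= (Rabs D + 1) * h.
Proof.
  intros HD; destruct (HD 1 ltac:(lra)) as (delta & Hdelta & Hq).
  exists delta; split; auto; intros h Hh.
  specialize (Hq (- h) ltac:(lra)); replace (s + - h) with (s - h) in Hq by ring.
  apply Rabs_le_of_quotient in Hq; [|lra].
  rewrite Rabs_Ropp, (Rabs_pos_eq h) in Hq by lra; exact Hq.
Qed.

Lemma right_deriv_local_lip f s D K :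
  Rabs D < K -> right_deriv f s D -> exists delta, 0 < delta /\
    forall h, 0 < h < delta -> Rabs (f (s + h) - f s) <= K * h.
Proof.
  intros HK HD; destruct (HD (K - Rabs D) ltac:(lra)) as (delta & Hdelta & Hq).
  exists delta; split; auto; intros h Hh.
  specialize (Hq h Hh); apply Rabs_le_of_quotient in Hq; [|lra].
  rewrite (Rabs_pos_eq h) in Hq by lra; replace K with (Rabs D + (K - Rabs D)) by ring; exact Hq.
Qed.

Lemma increment_bound_left_closed f a s K Dl :
  a < s -> left_deriv f s Dl ->
  (forall y, a <= y < s -> Rabs (f y - f a) <= K * (y - a)) ->
  Rabs (f s - f a) <= K * (s - a).
Proof.
  intros Has HDl Hbelow.
  destruct (left_deriv_local_lip f s Dl HDl) as (delta & Hdelta & Hlip).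
  set (c := Rabs Dl + 1); assert (Hc : 0 < c) by (pose proof (Rabs_pos Dl); unfold c; lra).
  apply le_epsilon; intros eps Heps.
  set (h := Rmin (Rmin (delta / 2) ((s - a) / 2)) (eps / c)).
  assert (Hh : 0 < h) by (unfold h; repeat apply Rmin_glb_lt; try lra; apply Rdiv_lt_0_compat; lra).
  assert (Hh1 : h <= delta / 2) by (unfold h; eapply Rle_trans; [apply Rmin_l | apply Rmin_l]).
  assert (Hh2 : h <= (s - a) / 2) by (unfold h; eapply Rle_trans; [apply Rmin_l | apply Rmin_r]).
  assert (Hh3 : c * h <= eps).
  { replace eps with (c * (eps / c)) by (field; lra).
    apply Rmult_le_compat_l; [lra | apply Rmin_r]. }
  pose proof (Hlip h ltac:(lra)); pose proof (Hbelow (s - h) ltac:(lra)).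
  assert (Htri : Rabs (f s - f a) <= Rabs (f (s - h) - f a) + Rabs (f (s - h) - f s)).
  { replace (f s - f a) with ((f (s - h) - f a) - (f (s - h) - f s)) by ring.
    eapply Rle_trans; [apply Rabs_triang | rewrite Rabs_Ropp; lra]. }
  assert (HK : 0 <= K).
  { pose proof (Hbelow a ltac:(lra)); pose proof (Hbelow ((a + s) / 2) ltac:(lra)).
    pose proof (Rabs_pos (f ((a + s) / 2) - f a)); nra. }
  assert (0 <= K * h) by (apply Rmult_le_pos; lra).
  change ((Rabs Dl + 1) * h) with (c * h) in *; lra.
Qed.

Lemma increment_bound_right_open f a s K Dr :
  Rabs Dr < K -> right_deriv f s Dr -> Rabs (f s - f a) <= K * (s - a) ->
  exists delta, 0 < delta /\ forall y, s < y < s + delta -> Rabs (f y - f a) <= K * (y - a).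
Proof.
  intros HK HDr Hs.
  destruct (right_deriv_local_lip f s Dr K HK HDr) as (delta & Hdelta & Hstep).
  exists delta; split; auto; intros y Hy.
  pose proof (Hstep (y - s) ltac:(lra)) as Hys; replace (s + (y - s)) with y in Hys by ring.
  replace (f y - f a) with ((f y - f s) + (f s - f a)) by ring.
  eapply Rle_trans; [apply Rabs_triang | lra].
Qed.

Lemma one_sided_mvt_strict f M K a b :
  a <= b -> M < K ->
  (forall s, a <= s <= b -> exists Dl, left_deriv f s Dl) ->
  (forall s, a <= s <= b -> exists Dr, right_deriv f s Dr /\ Rabs Dr <= M) ->
  Rabs (f b - f a) <= K * (b - a).
Proof.
  intros Hab HMK Hl Hr.
  set (good x := a <= x <= b /\ forall y, a <= y <= x -> Rabs (f y - f a) <= K * (y - a)).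
  assert (Hga : good a).
  { split; [lra|]; intros y Hy; replace y with a by lra.
    unfold Rminus; rewrite Rplus_opp_r, Rabs_R0; lra. }
  destruct (completeness good) as [s [Hub Hlub]]; [exists b; intros x [Hx _]; lra | eauto|].
  assert (Has : a <= s) by (apply Hub, Hga).
  assert (Hsb : s <= b) by (apply Hlub; intros x [Hx _]; lra).
  assert (Hbelow : forall y, a <= y < s -> Rabs (f y - f a) <= K * (y - a)).
  { intros y Hy; apply NNPP; intros Hno.
    assert (s <= y); [|lra].
    apply Hlub; intros x [_ Hx]; apply Rnot_lt_le; intros Hxy; apply Hno, Hx; lra. }
  assert (Hgs : good s).
  { split; [lra|]; intros y Hy.
    destruct (Req_dec y s) as [->|Hne]; [|apply Hbelow; lra].
    destruct (Req_dec s a) as [->|Hsa]; [apply Hga; lra|].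
    destruct (Hl s ltac:(lra)) as [Dl HDl].
    apply (increment_bound_left_closed f a s K Dl); auto; lra. }
  destruct (Req_dec s b) as [<-|Hsb']; [apply Hgs; lra|].
  destruct (Hr s ltac:(lra)) as (Dr & HDr & HDrM).
  destruct (increment_bound_right_open f a s K Dr ltac:(lra) HDr (proj2 Hgs s ltac:(lra)))
    as (delta & Hdelta & Hstep).
  set (h := Rmin (delta / 2) ((b - s) / 2)).
  assert (Hh : 0 < h) by (unfold h; apply Rmin_glb_lt; lra).
  assert (Hh1 : h <= delta / 2) by apply Rmin_l.
  assert (Hh2 : h <= (b - s) / 2) by apply Rmin_r.
  assert (Hgood : good (s + h)).
  { split; [lra|]; intros y Hy.
    destruct (Rle_lt_dec y s); [apply Hgs; lra | apply Hstep; lra]. }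
  pose proof (Hub _ Hgood); lra.
Qed.

Lemma one_sided_mvt f M a b :
  a <= b ->
  (forall s, a <= s <= b -> exists Dl, left_deriv f s Dl) ->
  (forall s, a <= s <= b -> exists Dr, right_deriv f s Dr /\ Rabs Dr <= M) ->
  Rabs (f b - f a) <= M * (b - a).
Proof.
  intros Hab Hl Hr; apply le_epsilon; intros eps Heps.
  pose proof (one_sided_mvt_strict f M (M + eps / (b - a + 1)) a b Hab) as H.
  assert (Hq : 0 < eps / (b - a + 1)) by (apply Rdiv_lt_0_compat; lra).
  assert (Hfrac : eps / (b - a + 1) * (b - a) <= eps).
  { replace (eps / (b - a + 1) * (b - a)) with (eps * ((b - a) / (b - a + 1))) by (field; lra).
    assert ((b - a) / (b - a + 1) <= 1)
      by (apply Rmult_le_reg_r with (b - a + 1); [lra|]; field_simplify; lra).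
    nra. }
  specialize (H ltac:(lra) Hl Hr); lra.
Qed.

Lemma one_sided_lipschitz f M S x y :
  (forall s, exists Dl, left_deriv f s Dl) ->
  (forall s, exists Dr, right_deriv f s Dr) ->
  (forall s Dr, Rabs s <= S -> right_deriv f s Dr -> Rabs Dr <= M) ->
  Rabs x <= S -> Rabs y <= S -> Rabs (f y - f x) <= M * Rabs (y - x).
Proof.
  intros Hl Hr HM Hx Hy.
  assert (Hmono : forall a b, a <= b -> Rabs a <= S -> Rabs b <= S ->
                    Rabs (f b - f a) <= M * (b - a)).
  { intros a b Hab Ha Hb; apply one_sided_mvt; auto.
    intros s Hs; destruct (Hr s) as [Dr HDr]; exists Dr; split; auto.
    apply (HM s); auto; apply Rabs_le.
    pose proof (Rle_abs (- a)); pose proof (Rle_abs b); rewrite Rabs_Ropp in *; lra. }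
  destruct (Rle_dec x y).
  - rewrite (Rabs_pos_eq (y - x)) by lra; auto.
  - rewrite (Rabs_minus_sym (f y)), (Rabs_minus_sym y), (Rabs_pos_eq (x - y)) by lra.
    apply Hmono; auto; lra.
Qed.

Definition shrink_fan_in (W : nat -> nat -> nat -> R) l j0 t : nat -> nat -> nat -> R :=
  fun q i j => if andb (Nat.eqb q l) (Nat.eqb j j0) then (1 - t) * W q i j else W q i j.

Definition shrink_fan_out (W : nat -> nat -> nat -> R) l j0 t : nat -> nat -> nat -> R :=
  fun q i j => if andb (Nat.eqb q (S l)) (Nat.eqb i j0) then (1 - t) * W q i j else W q i j.

Lemma shrink_fan_in_same W l j0 t i : shrink_fan_in W l j0 t l i j0 = (1 - t) * W l i j0.
Proof. unfold shrink_fan_in; now rewrite !Nat.eqb_refl. Qed.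

Lemma shrink_fan_in_other W l j0 t q i j :
  (q <> l \/ j <> j0) -> shrink_fan_in W l j0 t q i j = W q i j.
Proof.
  intros H; unfold shrink_fan_in.
  destruct (Nat.eqb_spec q l), (Nat.eqb_spec j j0); simpl; auto; tauto.
Qed.

Lemma shrink_fan_out_same W l j0 t k : shrink_fan_out W l j0 t (S l) j0 k = (1 - t) * W (S l) j0 k.
Proof. unfold shrink_fan_out; now rewrite !Nat.eqb_refl. Qed.

Lemma shrink_fan_out_other W l j0 t q i k :
  (q <> S l \/ i <> j0) -> shrink_fan_out W l j0 t q i k = W q i k.
Proof.
  intros H; unfold shrink_fan_out.
  destruct (Nat.eqb_spec q (S l)), (Nat.eqb_spec i j0); simpl; auto; tauto.
Qed.

Lemma Rabs_shrink_le (a t : R) : 0 <= t <= 1 -> Rabs ((1 - t) * a) <= Rabs a.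
Proof. intros Ht; rewrite Rabs_mult, Rabs_pos_eq by lra; pose proof (Rabs_pos a); nra. Qed.

Lemma Rabs_shrink_sub (a t : R) : 0 <= t -> Rabs ((1 - t) * a - a) = t * Rabs a.
Proof.
  intros Ht; replace ((1 - t) * a - a) with (- (t * a)) by ring.
  now rewrite Rabs_Ropp, Rabs_mult, Rabs_pos_eq.
Qed.

Section Forward.

Variables (L : nat) (d : nat -> nat) (sigma : nat -> R -> R) (b1 b2 : nat -> R -> R).
Hypothesis b1_nonneg : forall l S, 0 <= S -> 0 <= b1 l S.
Hypothesis b2_nonneg : forall l S, 0 <= S -> 0 <= b2 l S.
Hypothesis sigma_linear_bound : forall l S s, (1 <= l <= L)%nat -> 0 <= S -> Rabs s <= S ->
  Rabs (sigma l s) <= b1 l S * Rabs s.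
Hypothesis sigma_lipschitz : forall l S a b, (1 <= l <= L)%nat -> 0 <= S ->
  Rabs a <= S -> Rabs b <= S -> Rabs (sigma l b - sigma l a) <= b2 l S * Rabs (b - a).

Definition preact (W : nat -> nat -> nat -> R) x l k :=
  rsum (d (pred l)) (fun i => layer d sigma W x (pred l) i * W l i k).

Lemma layer_S W x m k : layer d sigma W x (S m) k = sigma (S m) (preact W x (S m) k).
Proof. reflexivity. Qed.

Lemma layer_agree W W' x m :
  (forall q i j, (1 <= q <= m)%nat -> W' q i j = W q i j) ->
  forall j, layer d sigma W' x m j = layer d sigma W x m j.
Proof.
  induction m as [|m IH]; intros H j; simpl; auto.
  f_equal; apply rsum_ext; intros i Hi.
  rewrite IH by (intros; apply H; lia); rewrite H by lia; reflexivity.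
Qed.

Definition dlayer W W' x m j := layer d sigma W' x m j - layer d sigma W x m j.

(* Instantiated with the l1-norm for Omega_in and with the l-infinity norm for Omega_out. *)
Variable N : nat -> (nat -> R) -> R.
Hypothesis N_nonneg : forall n v, 0 <= N n v.
Hypothesis Rabs_le_N : forall n v i, (i < n)%nat -> Rabs (v i) <= N n v.
Hypothesis N_le_scal : forall n u v c, 0 <= c ->
  (forall i, (i < n)%nat -> Rabs (u i) <= c * Rabs (v i)) -> N n u <= c * N n v.

Variables C X : R.
Hypothesis C_nonneg : 0 <= C.
Hypothesis X_nonneg : 0 <= X.

Definition op_bounded (W : nat -> nat -> nat -> R) : Prop :=
  forall l x, (1 <= l <= L)%nat ->
    N (d l) (fun k => rsum (d (pred l)) (fun i => x i * W l i k)) <= C * N (d (pred l)) x.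

Fixpoint act_bound m : R :=
  match m with O => X | S k => b1 (S k) (act_bound k * C) * (act_bound k * C) end.

Definition preact_bound m := act_bound (pred m) * C.

Fixpoint gain m0 k : R :=
  match k with
  | O => 1
  | S k => gain m0 k * (C * b2 (S (m0 + k)) (preact_bound (S (m0 + k))))
  end.

Definition downstream_gain l := gain (S l) (L - S l) * b2 (S l) (preact_bound (S l)).

Lemma act_bound_nonneg m : 0 <= act_bound m.
Proof. induction m; simpl; auto; apply Rmult_le_pos; [apply b1_nonneg|]; nra. Qed.

Lemma preact_bound_nonneg m : 0 <= preact_bound m.
Proof. apply Rmult_le_pos; auto; apply act_bound_nonneg. Qed.

Lemma gain_nonneg m0 k : 0 <= gain m0 k.
Proof.
  induction k; simpl; [lra|].
  apply Rmult_le_pos; auto; apply Rmult_le_pos; auto; apply b2_nonneg, preact_bound_nonneg.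
Qed.

Lemma downstream_gain_nonneg l : 0 <= downstream_gain l.
Proof. apply Rmult_le_pos; [apply gain_nonneg | apply b2_nonneg, preact_bound_nonneg]. Qed.

Section Activations.

Variables (W : nat -> nat -> nat -> R) (x : nat -> R).
Hypothesis W_bounded : op_bounded W.
Hypothesis x_bounded : N (d 0%nat) x <= X.

Lemma N_layer_le m : (m <= L)%nat -> N (d m) (layer d sigma W x m) <= act_bound m.
Proof.
  induction m as [|m IH]; intros Hm; [exact x_bounded|]; cbn [act_bound].
  assert (Hz : N (d (S m)) (preact W x (S m)) <= act_bound m * C).
  { eapply Rle_trans; [apply (W_bounded (S m)); lia|].
    rewrite Rmult_comm; apply Rmult_le_compat_r; auto; apply IH; lia. }
  pose proof (act_bound_nonneg m).
  assert (Hb : 0 <= b1 (S m) (act_bound m * C)) by (apply b1_nonneg; nra).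
  eapply Rle_trans; [apply N_le_scal with (v := preact W x (S m)); eauto|].
  - intros i Hi; rewrite layer_S; apply sigma_linear_bound; [lia | nra|].
    eapply Rle_trans; [apply Rabs_le_N; eauto | auto].
  - apply Rmult_le_compat_l; auto.
Qed.

Lemma Rabs_preact_le m k :
  (1 <= m <= L)%nat -> (k < d m)%nat -> Rabs (preact W x m k) <= preact_bound m.
Proof.
  intros Hm Hk; eapply Rle_trans; [apply Rabs_le_N; eauto|].
  unfold preact_bound; eapply Rle_trans; [apply (W_bounded m); lia|].
  rewrite Rmult_comm; apply Rmult_le_compat_r; auto; apply N_layer_le; lia.
Qed.

End Activations.

Lemma N_dlayer_propagate W W' x m0 :
  op_bounded W -> op_bounded W' -> N (d 0%nat) x <= X ->
  (forall q i j, (m0 < q)%nat -> W' q i j = W q i j) ->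
  forall k, (m0 + k <= L)%nat ->
    N (d (m0 + k)%nat) (dlayer W W' x (m0 + k)) <= gain m0 k * N (d m0) (dlayer W W' x m0).
Proof.
  intros HW HW' Hx Heq.
  induction k as [|k IH]; intros Hk; simpl; [rewrite Nat.add_0_r; lra|].
  rewrite Nat.add_succ_r in Hk |- *; set (q := (m0 + k)%nat) in *.
  set (b := b2 (S q) (preact_bound (S q))).
  assert (Hb : 0 <= b) by apply b2_nonneg, preact_bound_nonneg.
  assert (Hstep : N (d (S q)) (dlayer W W' x (S q)) <= b * (C * N (d q) (dlayer W W' x q))).
  { eapply Rle_trans; [apply N_le_scal with (c := b)
      (v := fun k0 => rsum (d q) (fun i => dlayer W W' x q i * W (S q) i k0)); auto|].
    - intros i Hi; unfold dlayer at 1; rewrite !layer_S.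
      replace (rsum (d q) (fun i0 => dlayer W W' x q i0 * W (S q) i0 i))
        with (preact W' x (S q) i - preact W x (S q) i).
      + apply sigma_lipschitz; [lia | apply preact_bound_nonneg | |];
          apply Rabs_preact_le; auto; lia.
      + unfold preact, dlayer; simpl pred; rewrite <- rsum_minus.
        apply rsum_ext; intros; rewrite Heq by lia; ring.
    - apply Rmult_le_compat_l; auto; apply (HW (S q)); lia. }
  pose proof (IH ltac:(lia)); pose proof (gain_nonneg m0 k).
  eapply Rle_trans; [apply Hstep|].
  apply Rle_trans with (b * (C * (gain m0 k * N (d m0) (dlayer W W' x m0)))); [|right; ring].
  apply Rmult_le_compat_l; auto; apply Rmult_le_compat_l; auto.
Qed.

(* Both unit perturbations below change the pre-activations of layer [l+1] by a multiple of the
   fan-out of unit [j0] of layer [l]. *)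
Lemma N_output_change W W' x l j0 delta :
  (S l <= L)%nat -> op_bounded W -> op_bounded W' -> N (d 0%nat) x <= X ->
  (forall q i j, (S l < q)%nat -> W' q i j = W q i j) ->
  (forall k, (k < d (S l))%nat ->
     preact W' x (S l) k - preact W x (S l) k = delta * W (S l) j0 k) ->
  N (d L) (dlayer W W' x L) <=
    downstream_gain l * Rabs delta * N (d (S l)) (W (S l) j0).
Proof.
  intros Hl HW HW' Hx Heq Hpre.
  assert (Hb : 0 <= b2 (S l) (preact_bound (S l))) by apply b2_nonneg, preact_bound_nonneg.
  pose proof (N_dlayer_propagate W W' x (S l) HW HW' Hx Heq (L - S l) ltac:(lia)) as Hprop.
  replace (S l + (L - S l))%nat with L in Hprop by lia.
  eapply Rle_trans; [apply Hprop|]; unfold downstream_gain; rewrite !Rmult_assoc.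
  apply Rmult_le_compat_l; [apply gain_nonneg|]; rewrite <- Rmult_assoc.
  apply N_le_scal; [apply Rmult_le_pos; auto; apply Rabs_pos|].
  intros k Hk; unfold dlayer; rewrite !layer_S.
  eapply Rle_trans; [apply sigma_lipschitz; [lia | apply preact_bound_nonneg | |];
    apply Rabs_preact_le; auto; lia|].
  rewrite Hpre, Rabs_mult by auto; right; ring.
Qed.

Section Unit_perturbation.

Variables (W : nat -> nat -> nat -> R) (x : nat -> R) (l j0 : nat) (t : R).
Hypotheses (l_hidden : (1 <= l < L)%nat) (j0_lt : (j0 < d l)%nat) (t_unit : 0 <= t <= 1).
Hypotheses (W_bounded : op_bounded W) (x_bounded : N (d 0%nat) x <= X).

Lemma N_output_change_fan_in :
  op_bounded (shrink_fan_in W l j0 t) ->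
  N (d L) (dlayer W (shrink_fan_in W l j0 t) x L) <=
    downstream_gain l * (b2 l (preact_bound l) * (t * Rabs (preact W x l j0)))
    * N (d (S l)) (W (S l) j0).
Proof.
  intros Wt_bounded; set (Wt := shrink_fan_in W l j0 t) in *.
  set (delta := dlayer W Wt x l j0).
  assert (Hbelow : forall j, layer d sigma Wt x (pred l) j = layer d sigma W x (pred l) j)
    by (apply layer_agree; intros; apply shrink_fan_in_other; left; lia).
  assert (Hpre : forall k, preact Wt x l k =
            if Nat.eqb k j0 then (1 - t) * preact W x l k else preact W x l k).
  { intros k; unfold preact; destruct (Nat.eqb_spec k j0) as [->|Hk].
    - rewrite <- rsum_scal_l; apply rsum_ext; intros i _.
      rewrite Hbelow; unfold Wt; rewrite shrink_fan_in_same; ring.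
    - apply rsum_ext; intros i _; rewrite Hbelow; unfold Wt; rewrite shrink_fan_in_other; auto. }
  assert (Hdelta : Rabs delta <= b2 l (preact_bound l) * (t * Rabs (preact W x l j0))).
  { unfold delta, dlayer; destruct l as [|m]; [lia|]; rewrite !layer_S, Hpre, Nat.eqb_refl.
    set (z := preact W x (S m) j0).
    assert (Hz : Rabs z <= preact_bound (S m)) by (apply Rabs_preact_le; auto; lia).
    assert (Hzt : Rabs ((1 - t) * z) <= preact_bound (S m))
      by (eapply Rle_trans; [apply Rabs_shrink_le | ]; auto).
    eapply Rle_trans; [apply (sigma_lipschitz (S m) (preact_bound (S m))); auto;
                       [lia | apply preact_bound_nonneg]|].
    rewrite Rabs_shrink_sub by lra; apply Rle_refl. }
  eapply Rle_trans; [apply (N_output_change W Wt x l j0 delta); auto; try lia|].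
  - intros q i j Hq; apply shrink_fan_in_other; left; lia.
  - intros k Hk; unfold preact; simpl pred; rewrite <- rsum_minus.
    rewrite (rsum_single (d l) _ j0); auto.
    + unfold Wt; rewrite shrink_fan_in_other by (left; lia); unfold delta, dlayer, Wt; ring.
    + intros i Hi Hne; unfold Wt; rewrite shrink_fan_in_other by (left; lia).
      destruct l as [|m]; [lia|]; rewrite !layer_S, Hpre.
      destruct (Nat.eqb_spec i j0); [contradiction | ring].
  - apply Rmult_le_compat_r; [apply N_nonneg|].
    apply Rmult_le_compat_l; [apply downstream_gain_nonneg | auto].
Qed.

Lemma N_output_change_fan_out :
  op_bounded (shrink_fan_out W l j0 t) ->
  N (d L) (dlayer W (shrink_fan_out W l j0 t) x L) <=
    downstream_gain l * (t * (b1 l (preact_bound l) * Rabs (preact W x l j0)))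
    * N (d (S l)) (W (S l) j0).
Proof.
  intros Wt_bounded; set (Wt := shrink_fan_out W l j0 t) in *.
  assert (Hagree : forall j, layer d sigma Wt x l j = layer d sigma W x l j)
    by (apply layer_agree; intros; apply shrink_fan_out_other; left; lia).
  assert (Hact : Rabs (layer d sigma W x l j0) <= b1 l (preact_bound l) * Rabs (preact W x l j0)).
  { destruct l as [|m]; [lia|]; rewrite layer_S.
    apply sigma_linear_bound; [lia | apply preact_bound_nonneg|].
    apply (Rabs_preact_le W x W_bounded x_bounded); auto; lia. }
  eapply Rle_trans;
    [apply (N_output_change W Wt x l j0 (- t * layer d sigma W x l j0)); auto; try lia|].
  - intros q i j Hq; apply shrink_fan_out_other; left; lia.
  - intros k Hk; unfold preact; simpl pred; rewrite <- rsum_minus.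
    rewrite (rsum_single (d l) _ j0); auto.
    + unfold Wt; rewrite shrink_fan_out_same, Hagree; ring.
    + intros i Hi Hne; unfold Wt; rewrite shrink_fan_out_other, Hagree by auto; ring.
  - apply Rmult_le_compat_r; [apply N_nonneg|].
    apply Rmult_le_compat_l; [apply downstream_gain_nonneg|].
    rewrite Rabs_mult, Rabs_Ropp, (Rabs_pos_eq t) by lra.
    apply Rmult_le_compat_l; lra.
Qed.

End Unit_perturbation.

End Forward.

Definition norm1 n (v : nat -> R) : R := rsum n (fun i => Rabs (v i)).

Fixpoint norm_inf n (v : nat -> R) : R :=
  match n with O => 0 | S k => Rmax (norm_inf k v) (Rabs (v k)) end.

Lemma norm1_nonneg n v : 0 <= norm1 n v.
Proof. apply rsum_nonneg; intros; apply Rabs_pos. Qed.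

Lemma Rabs_le_norm1 n v i : (i < n)%nat -> Rabs (v i) <= norm1 n v.
Proof. intros; apply (rsum_term_le n (fun i => Rabs (v i))); auto; intros; apply Rabs_pos. Qed.

Lemma norm1_le_scal n u v c :
  0 <= c -> (forall i, (i < n)%nat -> Rabs (u i) <= c * Rabs (v i)) -> norm1 n u <= c * norm1 n v.
Proof. intros; unfold norm1; rewrite <- rsum_scal_l; now apply rsum_le. Qed.

Lemma norm_inf_nonneg n v : 0 <= norm_inf n v.
Proof. induction n; simpl; [lra | eapply Rle_trans; [apply IHn | apply Rmax_l]]. Qed.

Lemma Rabs_le_norm_inf n v i : (i < n)%nat -> Rabs (v i) <= norm_inf n v.
Proof.
  induction n as [|n IH]; intros Hi; simpl; [lia|].
  destruct (Nat.eq_dec i n) as [->|]; [apply Rmax_r|].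
  eapply Rle_trans; [apply IH; lia | apply Rmax_l].
Qed.

Lemma norm_inf_le n v c : 0 <= c -> (forall i, (i < n)%nat -> Rabs (v i) <= c) -> norm_inf n v <= c.
Proof. induction n; intros Hc H; simpl; auto; apply Rmax_lub; [apply IHn | apply H]; auto. Qed.

Lemma norm_inf_le_scal n u v c :
  0 <= c -> (forall i, (i < n)%nat -> Rabs (u i) <= c * Rabs (v i)) ->
  norm_inf n u <= c * norm_inf n v.
Proof.
  intros Hc H; apply norm_inf_le; [apply Rmult_le_pos; auto; apply norm_inf_nonneg|].
  intros i Hi; eapply Rle_trans; [apply H; auto|].
  apply Rmult_le_compat_l; auto; now apply Rabs_le_norm_inf.
Qed.

Lemma norm_inf_le_pnorm p n v : 1 <= p -> norm_inf n v <= pnorm p n v.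
Proof. intros; apply norm_inf_le; [apply pnorm_nonneg | intros; now apply Rabs_le_pnorm]. Qed.

Lemma norm1_le_norm_inf n v : norm1 n v <= INR n * norm_inf n v.
Proof. rewrite <- rsum_const; apply rsum_le; intros; now apply Rabs_le_norm_inf. Qed.

Lemma op_bounded_norm1 L d (W : nat -> nat -> nat -> R) C :
  (forall l i, (1 <= l <= L)%nat -> (i < d (pred l))%nat -> norm1 (d l) (W l i) <= C) ->
  op_bounded L d norm1 C W.
Proof.
  intros HW l x Hl; unfold norm1.
  apply Rle_trans with
    (rsum (d l) (fun k => rsum (d (pred l)) (fun i => Rabs (x i) * Rabs (W l i k)))).
  - apply rsum_le; intros k _; eapply Rle_trans; [apply rsum_abs|].
    right; apply rsum_ext; intros; apply Rabs_mult.
  - rewrite rsum_swap, <- rsum_scal_l; apply rsum_le; intros i Hi.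
    rewrite rsum_scal_l, Rmult_comm; apply Rmult_le_compat_r; [apply Rabs_pos | now apply HW].
Qed.

Lemma op_bounded_norm_inf L d (W : nat -> nat -> nat -> R) C :
  0 <= C ->
  (forall l k, (1 <= l <= L)%nat -> (k < d l)%nat -> norm1 (d (pred l)) (fun i => W l i k) <= C) ->
  op_bounded L d norm_inf C W.
Proof.
  intros HC HW l x Hl.
  apply norm_inf_le; [apply Rmult_le_pos; auto; apply norm_inf_nonneg|].
  intros k Hk; eapply Rle_trans; [apply rsum_abs|].
  apply Rle_trans with (rsum (d (pred l)) (fun i => norm_inf (d (pred l)) x * Rabs (W l i k))).
  - apply rsum_le; intros i Hi; rewrite Rabs_mult.
    apply Rmult_le_compat_r; [apply Rabs_pos | now apply Rabs_le_norm_inf].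
  - rewrite rsum_scal_l, Rmult_comm.
    apply Rmult_le_compat_r; [apply norm_inf_nonneg | now apply HW].
Qed.

Lemma Rabs_preact_le_norm1_pnorm d sigma W x l j p :
  1 <= p ->
  Rabs (preact d sigma W x l j) <=
    norm1 (d (pred l)) (layer d sigma W x (pred l)) * pnorm p (d (pred l)) (fun i => W l i j).
Proof.
  intros Hp; unfold preact, norm1; eapply Rle_trans; [apply rsum_abs|].
  rewrite <- rsum_scal_r; apply rsum_le; intros i Hi; rewrite Rabs_mult.
  apply Rmult_le_compat_l; [apply Rabs_pos|].
  apply (Rabs_le_pnorm p _ (fun i => W l i j)); auto.
Qed.

Lemma Rabs_preact_le_norm_inf_norm1 d sigma W x l j :
  Rabs (preact d sigma W x l j) <=
    norm_inf (d (pred l)) (layer d sigma W x (pred l)) * norm1 (d (pred l)) (fun i => W l i j).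
Proof.
  unfold preact, norm1; eapply Rle_trans; [apply rsum_abs|].
  rewrite <- rsum_scal_l; apply rsum_le; intros i Hi; rewrite Rabs_mult.
  apply Rmult_le_compat_r; [apply Rabs_pos | now apply Rabs_le_norm_inf].
Qed.

Lemma lsum_update L F G l :
  (1 <= l <= L)%nat -> (forall l', (1 <= l' <= L)%nat -> l' <> l -> F l' = G l') ->
  lsum L G = lsum L F + (G l - F l).
Proof.
  intros Hl H; unfold lsum.
  rewrite (rsum_update L (fun k => F (S k)) (fun k => G (S k)) (pred l))
    by (lia || (intros; apply H; lia)).
  now replace (S (pred l)) with l by lia.
Qed.

Lemma Omega_shrink_fan_in L d W lam p l j0 t :
  1 <= p -> (1 <= l <= L)%nat -> (j0 < d l)%nat -> 0 <= t <= 1 ->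
  Omega Reg_in L d (shrink_fan_in W l j0 t) lam p =
    Omega Reg_in L d W lam p - lam * t * pnorm p (d (pred l)) (fun i => W l i j0).
Proof.
  intros Hp Hl Hj Ht; simpl.
  rewrite (lsum_update L (fun l => rsum (d l) (fun j => pnorm p (d (pred l)) (fun i => W l i j)))
             _ l Hl).
  - rewrite (rsum_update (d l) (fun j => pnorm p (d (pred l)) (fun i => W l i j)) _ j0 Hj).
    + rewrite (pnorm_ext p _ _ (fun i => (1 - t) * W l i j0))
        by (intros; apply shrink_fan_in_same).
      rewrite pnorm_scal by lra; ring.
    + intros j _ Hne; apply pnorm_ext; intros; rewrite shrink_fan_in_other; auto.
  - intros l' _ Hne; apply rsum_ext; intros j _; apply pnorm_ext; intros.
    rewrite shrink_fan_in_other; auto.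
Qed.

Lemma Omega_shrink_fan_out L d W lam p l j0 t :
  1 <= p -> (S l <= L)%nat -> (j0 < d l)%nat -> 0 <= t <= 1 ->
  Omega Reg_out L d (shrink_fan_out W l j0 t) lam p =
    Omega Reg_out L d W lam p - lam * t * pnorm p (d (S l)) (W (S l) j0).
Proof.
  intros Hp Hl Hj Ht; simpl.
  rewrite (lsum_update L (fun l => rsum (d (pred l)) (fun i => pnorm p (d l) (fun j => W l i j)))
             _ (S l) ltac:(lia)); simpl pred.
  - rewrite (rsum_update (d l) (fun i => pnorm p (d (S l)) (fun j => W (S l) i j)) _ j0 Hj).
    + rewrite (pnorm_ext p _ _ (fun k => (1 - t) * W (S l) j0 k))
        by (intros; apply shrink_fan_out_same).
      rewrite pnorm_scal by lra; change (fun j => W (S l) j0 j) with (W (S l) j0); ring.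
    + intros i _ Hne; apply pnorm_ext; intros; rewrite shrink_fan_out_other; auto.
  - intros l' _ Hne; apply rsum_ext; intros i _; apply pnorm_ext; intros.
    rewrite shrink_fan_out_other; auto.
Qed.

Lemma Omega_nonneg k L d W lam p : 0 < lam -> 0 <= Omega k L d W lam p.
Proof.
  intros; destruct k; simpl; apply Rmult_le_pos; try lra; apply rsum_nonneg; intros;
    apply rsum_nonneg; intros; apply pnorm_nonneg.
Qed.

Lemma lsum_term_le L F l :
  (1 <= l <= L)%nat -> (forall l, (1 <= l <= L)%nat -> 0 <= F l) -> F l <= lsum L F.
Proof.
  intros Hl H; unfold lsum; replace l with (S (pred l)) at 1 by lia.
  apply (rsum_term_le L (fun k => F (S k))); [lia | intros; apply H; lia].
Qed.

Lemma fan_pnorms_le_Omega k L d W lam p l :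
  0 < lam -> (1 <= l <= L)%nat ->
  match k with
  | Reg_in => rsum (d l) (fun j => pnorm p (d (pred l)) (fun i => W l i j))
  | Reg_out => rsum (d (pred l)) (fun i => pnorm p (d l) (fun j => W l i j))
  end <= Omega k L d W lam p / lam.
Proof.
  intros Hlam Hl; unfold Rdiv; apply Rmult_le_reg_l with lam; auto.
  replace (lam * (Omega k L d W lam p * / lam)) with (Omega k L d W lam p) by (field; lra).
  destruct k; simpl; apply Rmult_le_compat_l; try lra.
  - apply (lsum_term_le L (fun l => rsum (d l) (fun j => pnorm p (d (pred l)) (fun i => W l i j))));
      auto; intros; apply rsum_nonneg; intros; apply pnorm_nonneg.
  - apply (lsum_term_le L (fun l => rsum (d (pred l)) (fun i => pnorm p (d l) (fun j => W l i j))));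
      auto; intros; apply rsum_nonneg; intros; apply pnorm_nonneg.
Qed.

Lemma proper_hidden_unit L d W l j :
  proper L d W -> (1 <= l < L)%nat -> (j < d l)%nat ->
  nonzero_vec (d (pred l)) (fun i => W l i j) = true /\ nonzero_vec (d (S l)) (W (S l) j) = true.
Proof.
  intros H Hl Hj; specialize (H l ltac:(lia)); unfold proper_dim in H.
  replace (andb (Nat.ltb 0 l) (Nat.ltb l L)) with true in H
    by (symmetry; apply andb_true_intro; split; apply Nat.ltb_lt; lia).
  apply andb_prop, (countb_full _ _ H j Hj).
Qed.

Lemma shrink_fan_in_close d W p l j0 t q i j :
  1 <= p -> 0 <= t -> (i < d (pred q))%nat ->
  Rabs (shrink_fan_in W l j0 t q i j - W q i j) <= t * pnorm p (d (pred l)) (fun i => W l i j0).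
Proof.
  intros Hp Ht Hi.
  assert (0 <= t * pnorm p (d (pred l)) (fun i => W l i j0))
    by (apply Rmult_le_pos; [lra | apply pnorm_nonneg]).
  destruct (Nat.eq_dec q l) as [->|Hq]; [destruct (Nat.eq_dec j j0) as [->|Hj]|].
  - rewrite shrink_fan_in_same, Rabs_shrink_sub by lra.
    apply Rmult_le_compat_l; [lra | apply (Rabs_le_pnorm p _ (fun i => W l i j0)); auto].
  - rewrite shrink_fan_in_other, Rminus_diag, Rabs_R0; auto.
  - rewrite shrink_fan_in_other, Rminus_diag, Rabs_R0; auto.
Qed.

Lemma shrink_fan_out_close d W p l j0 t q i j :
  1 <= p -> 0 <= t -> (j < d q)%nat ->
  Rabs (shrink_fan_out W l j0 t q i j - W q i j) <= t * pnorm p (d (S l)) (W (S l) j0).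
Proof.
  intros Hp Ht Hj.
  assert (0 <= t * pnorm p (d (S l)) (W (S l) j0))
    by (apply Rmult_le_pos; [lra | apply pnorm_nonneg]).
  destruct (Nat.eq_dec q (S l)) as [->|Hq]; [destruct (Nat.eq_dec i j0) as [->|Hi]|].
  - rewrite shrink_fan_out_same, Rabs_shrink_sub by lra.
    apply Rmult_le_compat_l; [lra | apply (Rabs_le_pnorm p _ (W (S l) j0)); auto].
  - rewrite shrink_fan_out_other, Rminus_diag, Rabs_R0; auto.
  - rewrite shrink_fan_out_other, Rminus_diag, Rabs_R0; auto.
Qed.

Lemma uniform_radius {A : Type} (P : A -> R -> Prop) (l : list A) :
  (forall a r1 r2, 0 < r1 <= r2 -> P a r2 -> P a r1) ->
  (forall a, In a l -> exists r, 0 < r /\ P a r) ->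
  exists r, 0 < r /\ forall a, In a l -> P a r.
Proof.
  intros Hmono; induction l as [|a l IH]; intros H; [exists 1; split; [lra | contradiction]|].
  destruct (IH ltac:(intros; apply H; right; auto)) as (r1 & Hr1 & H1).
  destruct (H a ltac:(left; auto)) as (r2 & Hr2 & H2).
  assert (Hm : 0 < Rmin r1 r2) by (apply Rmin_glb_lt; auto).
  exists (Rmin r1 r2); split; auto; intros b [<-|Hb].
  - apply Hmono with r2; auto; split; auto; apply Rmin_r.
  - apply Hmono with r1; auto; split; auto; apply Rmin_l.
Qed.

Lemma exists_small_scale P Q eps : 0 <= P -> 0 <= Q -> 0 < eps ->
  exists t, 0 < t <= 1 /\ t * P < eps /\ t * Q < eps.
Proof.
  intros HP HQ He; exists (Rmin 1 (eps / (P + Q + 1))).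
  assert (Hq : 0 < eps / (P + Q + 1)) by (apply Rdiv_lt_0_compat; lra).
  assert (Ht : 0 < Rmin 1 (eps / (P + Q + 1)) <= 1)
    by (split; [apply Rmin_glb_lt | apply Rmin_l]; lra).
  assert (Hle : Rmin 1 (eps / (P + Q + 1)) * (P + Q + 1) <= eps).
  { eapply Rle_trans; [apply Rmult_le_compat_r; [lra | apply Rmin_r]|].
    right; field; lra. }
  repeat split; try lra; nra.
Qed.

Lemma net_padded L d sigma W x : padded (d L) (net L d sigma W x).
Proof. intros i Hi; unfold net; destruct (Nat.ltb_spec i (d L)); auto; lia. Qed.

Lemma Rdiv_INR_sub_le a b n T : 0 <= T -> a - b <= INR n * T -> a / INR n - b / INR n <= T.
Proof.
  intros HT H; destruct n as [|n]; [unfold Rdiv; simpl INR; rewrite Rinv_0; lra|].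
  assert (0 < INR (S n)) by (apply lt_0_INR; lia).
  replace (a / INR (S n) - b / INR (S n)) with ((a - b) / INR (S n)) by (field; lra).
  apply Rmult_le_reg_r with (INR (S n)); auto; unfold Rdiv.
  rewrite Rmult_assoc, Rinv_l by lra; lra.
Qed.

Lemma sum_map_nonneg {A : Type} (f : A -> R) l :
  (forall a, In a l -> 0 <= f a) -> 0 <= fold_right Rplus 0 (map f l).
Proof.
  induction l as [|a l IH]; intros H; simpl; [lra|].
  pose proof (H a (or_introl eq_refl)); pose proof (IH (fun b Hb => H b (or_intror Hb))); lra.
Qed.

Lemma sum_map_term_le {A : Type} (f : A -> R) l a :
  (forall a, In a l -> 0 <= f a) -> In a l -> f a <= fold_right Rplus 0 (map f l).
Proof.
  induction l as [|b l IH]; intros H Ha; simpl; [contradiction|].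
  pose proof (H b (or_introl eq_refl)).
  pose proof (sum_map_nonneg f l (fun c Hc => H c (or_intror Hc))).
  destruct Ha as [<-|Ha]; [lra|].
  pose proof (IH (fun c Hc => H c (or_intror Hc)) Ha); lra.
Qed.

Lemma sum_map_sub_le {A : Type} (f g : A -> R) l T :
  (forall a, In a l -> g a - f a <= T) ->
  fold_right Rplus 0 (map g l) - fold_right Rplus 0 (map f l) <= INR (length l) * T.
Proof.
  induction l as [|a l IH]; intros H; cbn [fold_right map length]; [simpl; lra|].
  pose proof (H a (or_introl eq_refl)); pose proof (IH (fun b Hb => H b (or_intror Hb))).
  rewrite S_INR; lra.
Qed.

Section Objective.

Variables (Y : Type) (L dL : nat) (sigma : nat -> R -> R) (e : (nat -> R) -> Y -> R)
  (D : list ((nat -> R) * Y)) (b3 : R -> R).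
Hypothesis b3_nonneg : forall S, 0 <= S -> 0 <= b3 S.
Hypothesis e_nonneg : forall v y, padded dL v -> 0 <= e v y.
Hypothesis e_diff : forall v y, padded dL v -> exists g, is_grad dL e y v g.
Hypothesis e_grad_bound : forall S v y g, 0 <= S -> padded dL v -> e v y <= S ->
  is_grad dL e y v g -> forall i, (i < dL)%nat -> Rabs (g i) <= b3 S.

Definition sample_loss d W (xy : (nat -> R) * Y) := e (net L d sigma W (fst xy)) (snd xy).

Definition loss_sum d W := fold_right Rplus 0 (map (sample_loss d W) D).

Lemma sample_loss_nonneg d W xy : d L = dL -> 0 <= sample_loss d W xy.
Proof. intros <-; apply e_nonneg, net_padded. Qed.

Lemma loss_sum_nonneg d W : d L = dL -> 0 <= loss_sum d W.
Proof. intros; apply sum_map_nonneg; intros; now apply sample_loss_nonneg. Qed.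

Lemma sample_loss_le_sum d W xy : d L = dL -> In xy D -> sample_loss d W xy <= loss_sum d W.
Proof. intros; apply sum_map_term_le; auto; intros; now apply sample_loss_nonneg. Qed.

Lemma Eobj_split k d W lam p :
  Eobj k L sigma e D lam p d W = loss_sum d W / INR (length D) + Omega k L d W lam p.
Proof. reflexivity. Qed.

Lemma Omega_le_Eobj k d W lam p :
  d L = dL -> Omega k L d W lam p <= Eobj k L sigma e D lam p d W.
Proof.
  intros HdL; rewrite Eobj_split.
  assert (0 <= loss_sum d W / INR (length D)); [|lra].
  destruct (length D) as [|n]; [simpl; unfold Rdiv; rewrite Rinv_0; lra|].
  apply Rmult_le_pos; [now apply loss_sum_nonneg | left; apply Rinv_0_lt_compat, lt_0_INR; lia].
Qed.

Lemma loss_sum_le d W k lam p B :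
  d L = dL -> 0 <= Omega k L d W lam p -> Eobj k L sigma e D lam p d W <= B ->
  loss_sum d W <= INR (length D) * Rabs B.
Proof.
  intros HdL HO HE; rewrite Eobj_split in HE; pose proof (loss_sum_nonneg d W HdL).
  destruct (length D) as [|n] eqn:En.
  - apply length_zero_iff_nil in En; unfold loss_sum; rewrite En; simpl; lra.
  - assert (Hn : 0 < INR (S n)) by (apply lt_0_INR; lia).
    assert (Havg : loss_sum d W / INR (S n) <= Rabs B) by (pose proof (Rle_abs B); lra).
    apply Rmult_le_compat_r with (r := INR (S n)) in Havg; [|lra].
    unfold Rdiv in Havg; rewrite Rmult_assoc, Rinv_l in Havg by lra; lra.
Qed.

Lemma loss_increment_le d W S :
  d L = dL -> 0 <= S -> loss_sum d W <= S ->
  exists r, 0 < r /\ forall xy, In xy D -> forall h, padded dL h ->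
    (forall i, (i < dL)%nat -> Rabs (h i) < r) ->
    e (fun i => net L d sigma W (fst xy) i + h i) (snd xy) - sample_loss d W xy
      <= (b3 S + 1) * norm1 dL h.
Proof.
  intros HdL HS Hsum.
  apply (uniform_radius (fun xy r => forall h, padded dL h ->
           (forall i, (i < dL)%nat -> Rabs (h i) < r) ->
           e (fun i => net L d sigma W (fst xy) i + h i) (snd xy) - sample_loss d W xy
             <= (b3 S + 1) * norm1 dL h)).
  { intros xy r1 r2 Hr H h Hh Hsmall; apply H; auto; intros i Hi; specialize (Hsmall i Hi); lra. }
  intros xy Hin; set (v := net L d sigma W (fst xy)).
  assert (Hv : padded dL v) by (rewrite <- HdL; apply net_padded).
  destruct (e_diff v (snd xy) Hv) as [g Hg].
  assert (Hgb : forall i, (i < dL)%nat -> Rabs (g i) <= b3 S).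
  { apply (e_grad_bound S v (snd xy) g HS Hv); auto.
    eapply Rle_trans; [apply (sample_loss_le_sum d W xy HdL Hin) | auto]. }
  destruct (Hg 1 ltac:(lra)) as (r & Hr & Hfr); exists r; split; auto; intros h Hh Hsmall.
  specialize (Hfr h Hh Hsmall).
  assert (Hlin : rsum dL (fun i => g i * h i) <= b3 S * norm1 dL h).
  { eapply Rle_trans; [apply Rle_abs|]; eapply Rle_trans; [apply rsum_abs|].
    unfold norm1; rewrite <- rsum_scal_l; apply rsum_le; intros i Hi; rewrite Rabs_mult.
    apply Rmult_le_compat_r; [apply Rabs_pos | auto]. }
  pose proof (Rle_abs (e (fun i => v i + h i) (snd xy) - e v (snd xy)
                       - rsum dL (fun i => g i * h i))).
  unfold sample_loss; fold v; unfold norm1 in *; lra.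
Qed.

Lemma local_min_rate_le k lam p B d W (Wt : R -> nat -> nat -> nat -> R) P0 P Q :
  0 < lam -> d L = dL ->
  local_min k L sigma e D lam p d W -> Eobj k L sigma e D lam p d W <= B ->
  0 <= P0 -> 0 <= Q ->
  (forall t, 0 < t <= 1 -> forall l i j, (1 <= l <= L)%nat -> (i < d (pred l))%nat ->
     (j < d l)%nat -> Rabs (Wt t l i j - W l i j) <= t * P0) ->
  (forall t, 0 < t <= 1 -> Omega k L d (Wt t) lam p = Omega k L d W lam p - lam * t * P) ->
  (forall t, 0 < t <= 1 -> forall xy, In xy D ->
     norm1 dL (fun i => net L d sigma (Wt t) (fst xy) i - net L d sigma W (fst xy) i) <= t * Q) ->
  lam * P <= (b3 (INR (length D) * Rabs B) + 1) * Q.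
Proof.
  intros Hlam HdL (eps & Heps & Hmin) HE HP0 HQ Hclose HOmega Hnet.
  set (Sl := INR (length D) * Rabs B).
  assert (HSl : 0 <= Sl) by (apply Rmult_le_pos; [apply pos_INR | apply Rabs_pos]).
  assert (Hb : 0 <= b3 Sl) by auto.
  destruct (loss_increment_le d W Sl HdL HSl) as (r & Hr & Hinc);
    [apply (loss_sum_le d W k lam p B); auto; now apply Omega_nonneg|].
  destruct (exists_small_scale P0 Q (Rmin eps r) HP0 HQ ltac:(now apply Rmin_glb_lt))
    as (t & Ht & HtP0 & HtQ).
  pose proof (Rmin_l eps r); pose proof (Rmin_r eps r).
  assert (Hle : Eobj k L sigma e D lam p d W <= Eobj k L sigma e D lam p d (Wt t)).
  { apply Hmin; intros l i j Hl Hi Hj; eapply Rle_lt_trans; [apply Hclose | ]; auto; lra. }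
  rewrite !Eobj_split, HOmega in Hle by auto.
  assert (Hloss : loss_sum d (Wt t) - loss_sum d W <= INR (length D) * ((b3 Sl + 1) * (t * Q))).
  { apply sum_map_sub_le; intros xy Hin.
    set (h := fun i => net L d sigma (Wt t) (fst xy) i - net L d sigma W (fst xy) i).
    assert (Hh : padded dL h)
      by (intros i Hi; unfold h; rewrite !(net_padded L d sigma _ _ i) by lia; ring).
    assert (Hsmall : forall i, (i < dL)%nat -> Rabs (h i) < r).
    { intros i Hi; eapply Rle_lt_trans; [apply Rabs_le_norm1, Hi|].
      eapply Rle_lt_trans; [apply Hnet | ]; auto; lra. }
    specialize (Hinc xy Hin h Hh Hsmall).
    replace (fun i => net L d sigma W (fst xy) i + h i) with (net L d sigma (Wt t) (fst xy)) in Hinc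
      by (apply functional_extensionality; intros i; unfold h; ring).
    eapply Rle_trans; [apply Hinc|]; apply Rmult_le_compat_l; [lra | apply Hnet; auto]. }
  apply Rdiv_INR_sub_le in Hloss; [|apply Rmult_le_pos; [lra | apply Rmult_le_pos; lra]].
  apply Rmult_le_reg_r with t; [lra | nra].
Qed.

End Objective.

Definition input_bound {Y : Type} (N : nat -> (nat -> R) -> R) n (D : list ((nat -> R) * Y)) :=
  fold_right (fun xy acc => Rmax (N n (fst xy)) acc) 0 D.

Lemma input_bound_nonneg {Y : Type} N n (D : list ((nat -> R) * Y)) : 0 <= input_bound N n D.
Proof. induction D; simpl; [lra | eapply Rle_trans; [apply IHD | apply Rmax_r]]. Qed.

Lemma le_input_bound {Y : Type} N n (D : list ((nat -> R) * Y)) xy :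
  In xy D -> N n (fst xy) <= input_bound N n D.
Proof.
  induction D as [|xy' D IH]; simpl; intros H; [contradiction|].
  destruct H as [<-|H]; [apply Rmax_l | eapply Rle_trans; [apply IH, H | apply Rmax_r]].
Qed.

Lemma div_succ_le lam A r : 0 <= A -> 0 <= r -> lam <= A * r -> lam / (A + 1) <= r.
Proof.
  intros HA Hr H; apply Rmult_le_reg_r with (A + 1); [lra|].
  unfold Rdiv; rewrite Rmult_assoc, Rinv_l by lra; nra.
Qed.

Section Proper_local_minima.

Variables (L d0 dL : nat) (Y : Type) (sigma : nat -> R -> R) (e : (nat -> R) -> Y -> R)
  (D : list ((nat -> R) * Y)) (b1 b2 : nat -> R -> R) (b3 : R -> R).
Hypothesis sigma_right_diff :
  forall l s, (1 <= l <= L)%nat -> exists Dr, right_deriv (sigma l) s Dr.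
Hypothesis sigma_left_diff :
  forall l s, (1 <= l <= L)%nat -> exists Dl, left_deriv (sigma l) s Dl.
Hypothesis b1_nonneg : forall l S, 0 <= S -> 0 <= b1 l S.
Hypothesis b2_nonneg : forall l S, 0 <= S -> 0 <= b2 l S.
Hypothesis b3_nonneg : forall S, 0 <= S -> 0 <= b3 S.
Hypothesis sigma_linear_bound : forall l S s, (1 <= l <= L)%nat -> 0 <= S -> Rabs s <= S ->
  Rabs (sigma l s) <= b1 l S * Rabs s.
Hypothesis sigma_deriv_bound : forall l S s Ds, (1 <= l <= L)%nat -> 0 <= S -> Rabs s <= S ->
  (left_deriv (sigma l) s Ds \/ right_deriv (sigma l) s Ds) -> Rabs Ds <= b2 l S.
Hypothesis e_nonneg : forall v y, padded dL v -> 0 <= e v y.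
Hypothesis e_diff : forall v y, padded dL v -> exists g, is_grad dL e y v g.
Hypothesis e_grad_bound : forall S v y g, 0 <= S -> padded dL v -> e v y <= S ->
  is_grad dL e y v g -> forall i, (i < dL)%nat -> Rabs (g i) <= b3 S.
Variables (lam p B : R).
Hypotheses (lam_pos : 0 < lam) (p_ge1 : 1 <= p).

Lemma sigma_lipschitz l S a b :
  (1 <= l <= L)%nat -> 0 <= S -> Rabs a <= S -> Rabs b <= S ->
  Rabs (sigma l b - sigma l a) <= b2 l S * Rabs (b - a).
Proof.
  intros Hl HS Ha Hb; apply one_sided_lipschitz with S; auto.
  intros s Dr Hs HDr; apply (sigma_deriv_bound l S s Dr); auto.
Qed.

Let C := Rabs B / lam.
Let Sl := INR (length D) * Rabs B.

Lemma C_nonneg : 0 <= C.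
Proof. apply Rmult_le_pos; [apply Rabs_pos | left; now apply Rinv_0_lt_compat]. Qed.

Lemma b3_Sl_nonneg : 0 <= b3 Sl.
Proof. apply b3_nonneg, Rmult_le_pos; [apply pos_INR | apply Rabs_pos]. Qed.

Lemma fan_pnorms_le k d W l :
  d L = dL -> Eobj k L sigma e D lam p d W <= B -> (1 <= l <= L)%nat ->
  match k with
  | Reg_in => rsum (d l) (fun j => pnorm p (d (pred l)) (fun i => W l i j))
  | Reg_out => rsum (d (pred l)) (fun i => pnorm p (d l) (fun j => W l i j))
  end <= C.
Proof.
  intros HdL HE Hl; eapply Rle_trans; [apply (fan_pnorms_le_Omega k L d W lam p l); auto|].
  apply Rmult_le_compat_r; [left; now apply Rinv_0_lt_compat|].
  assert (Omega k L d W lam p <= Eobj k L sigma e D lam p d W) by (eapply Omega_le_Eobj; eauto).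
  pose proof (Rle_abs B); lra.
Qed.

Lemma unit_lower_bound k d W (Wt : R -> nat -> nat -> nat -> R) P K r :
  d L = dL -> local_min k L sigma e D lam p d W -> Eobj k L sigma e D lam p d W <= B ->
  0 < P -> 0 <= K -> 0 <= r ->
  (forall t, 0 < t <= 1 -> forall l i j, (1 <= l <= L)%nat -> (i < d (pred l))%nat ->
     (j < d l)%nat -> Rabs (Wt t l i j - W l i j) <= t * P) ->
  (forall t, 0 < t <= 1 -> Omega k L d (Wt t) lam p = Omega k L d W lam p - lam * t * P) ->
  (forall t, 0 < t <= 1 -> forall xy, In xy D ->
     norm1 dL (fun i => net L d sigma (Wt t) (fst xy) i - net L d sigma W (fst xy) i)
       <= t * (K * P * r)) ->
  lam / ((b3 Sl + 1) * K + 1) <= r.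
Proof.
  intros HdL Hmin HE HP HK Hr Hclose HOmega Hnet.
  pose proof b3_Sl_nonneg.
  assert (Hrate : lam * P <= (b3 Sl + 1) * (K * P * r)).
  { eapply local_min_rate_le with (P0 := P); eauto;
      [lra | apply Rmult_le_pos; [apply Rmult_le_pos|]; lra]. }
  apply div_succ_le; [apply Rmult_le_pos; lra | auto|].
  apply Rmult_le_reg_r with P; auto; lra.
Qed.

Lemma net_diff_norm1 d W W' x :
  d L = dL ->
  norm1 dL (fun i => net L d sigma W' x i - net L d sigma W x i)
    = norm1 (d L) (dlayer d sigma W W' x L).
Proof.
  intros HdL; unfold norm1; rewrite HdL; apply rsum_ext; intros i Hi.
  unfold net, dlayer; rewrite HdL.
  now replace (Nat.ltb i dL) with true by (symmetry; apply Nat.ltb_lt; auto).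
Qed.

Lemma op_bounded_in d W W' :
  d L = dL -> Eobj Reg_in L sigma e D lam p d W <= B ->
  (forall q i k, Rabs (W' q i k) <= Rabs (W q i k)) -> op_bounded L d norm1 C W'.
Proof.
  intros HdL HE HW'; apply op_bounded_norm1; intros q i Hq Hi.
  eapply Rle_trans; [|apply (fan_pnorms_le Reg_in d W q HdL HE Hq)].
  apply rsum_le; intros k Hk; eapply Rle_trans; [apply HW'|].
  apply (Rabs_le_pnorm p _ (fun i => W q i k)); auto.
Qed.

Lemma op_bounded_out d W W' :
  d L = dL -> Eobj Reg_out L sigma e D lam p d W <= B ->
  (forall q i k, Rabs (W' q i k) <= Rabs (W q i k)) -> op_bounded L d norm_inf C W'.
Proof.
  intros HdL HE HW'; apply op_bounded_norm_inf; [apply C_nonneg|]; intros q k Hq Hk.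
  eapply Rle_trans; [|apply (fan_pnorms_le Reg_out d W q HdL HE Hq)].
  apply rsum_le; intros i Hi; eapply Rle_trans; [apply HW'|].
  apply (Rabs_le_pnorm p _ (fun j => W q i j)); auto.
Qed.

Lemma Rabs_shrink_fan_in_le W l j t q i k :
  0 <= t <= 1 -> Rabs (shrink_fan_in W l j t q i k) <= Rabs (W q i k).
Proof. intros; unfold shrink_fan_in; destruct (andb _ _); [now apply Rabs_shrink_le | lra]. Qed.

Lemma Rabs_shrink_fan_out_le W l j t q i k :
  0 <= t <= 1 -> Rabs (shrink_fan_out W l j t q i k) <= Rabs (W q i k).
Proof. intros; unfold shrink_fan_out; destruct (andb _ _); [now apply Rabs_shrink_le | lra]. Qed.

Let X_in := input_bound norm1 d0 D.
Let X_out := input_bound norm_inf d0 D.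
Let K_in l := downstream_gain L b1 b2 C X_in l * b2 l (preact_bound b1 C X_in l)
              * act_bound b1 C X_in (pred l).
Let K_out l := INR dL * (downstream_gain L b1 b2 C X_out l * b1 l (preact_bound b1 C X_out l)
               * act_bound b1 C X_out (pred l)).

Lemma K_in_nonneg l : 0 <= K_in l.
Proof.
  pose proof C_nonneg; pose proof (input_bound_nonneg norm1 d0 D).
  apply Rmult_le_pos; [apply Rmult_le_pos|];
    [apply downstream_gain_nonneg | apply b2_nonneg, preact_bound_nonneg | apply act_bound_nonneg];
    auto.
Qed.

Lemma K_out_nonneg l : 0 <= K_out l.
Proof.
  pose proof C_nonneg; pose proof (input_bound_nonneg norm_inf d0 D).
  apply Rmult_le_pos; [|apply Rmult_le_pos; [apply Rmult_le_pos|]];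
    [apply pos_INR | apply downstream_gain_nonneg | apply b1_nonneg, preact_bound_nonneg
    | apply act_bound_nonneg]; auto.
Qed.

Lemma output_change_shrink_fan_in d W l j t xy :
  d 0%nat = d0 -> d L = dL -> Eobj Reg_in L sigma e D lam p d W <= B ->
  (1 <= l < L)%nat -> (j < d l)%nat -> 0 <= t <= 1 -> In xy D ->
  norm1 dL (fun i => net L d sigma (shrink_fan_in W l j t) (fst xy) i - net L d sigma W (fst xy) i)
    <= t * (K_in l * pnorm p (d (pred l)) (fun i => W l i j) * norm1 (d (S l)) (W (S l) j)).
Proof.
  intros Hd0 HdL HE Hl Hj Ht Hin; rewrite net_diff_norm1 by auto.
  pose proof C_nonneg; assert (HX : 0 <= X_in) by apply input_bound_nonneg.
  assert (Hx : norm1 (d 0%nat) (fst xy) <= X_in) by (rewrite Hd0; now apply le_input_bound).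
  assert (HWb : op_bounded L d norm1 C W) by (apply (op_bounded_in d W); auto; intros; lra).
  set (P := pnorm p (d (pred l)) (fun i => W l i j)).
  assert (Hz : Rabs (preact d sigma W (fst xy) l j) <= act_bound b1 C X_in (pred l) * P).
  { eapply Rle_trans; [apply (Rabs_preact_le_norm1_pnorm _ _ _ _ _ _ p p_ge1)|].
    apply Rmult_le_compat_r; [apply pnorm_nonneg|].
    apply (N_layer_le L d sigma b1 b1_nonneg sigma_linear_bound norm1 Rabs_le_norm1
             norm1_le_scal C X_in); auto; lia. }
  eapply Rle_trans; [apply (N_output_change_fan_in L d sigma b1 b2 b1_nonneg b2_nonneg
     sigma_linear_bound sigma_lipschitz norm1 norm1_nonneg Rabs_le_norm1 norm1_le_scal
     C X_in); auto|].
  - apply (op_bounded_in d W); auto; intros; now apply Rabs_shrink_fan_in_le.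
  - pose proof (downstream_gain_nonneg L b1 b2 b1_nonneg b2_nonneg C X_in H HX l).
    assert (0 <= b2 l (preact_bound b1 C X_in l)) by (apply b2_nonneg, preact_bound_nonneg; auto).
    apply Rle_trans with (downstream_gain L b1 b2 C X_in l * (b2 l (preact_bound b1 C X_in l)
                            * (t * (act_bound b1 C X_in (pred l) * P)))
                          * norm1 (d (S l)) (W (S l) j)).
    + apply Rmult_le_compat_r; [apply norm1_nonneg|]; apply Rmult_le_compat_l; auto.
      apply Rmult_le_compat_l; auto; apply Rmult_le_compat_l; [lra | auto].
    + unfold K_in; right; ring.
Qed.

Lemma output_change_shrink_fan_out d W l j t xy :
  d 0%nat = d0 -> d L = dL -> Eobj Reg_out L sigma e D lam p d W <= B ->
  (1 <= l < L)%nat -> (j < d l)%nat -> 0 <= t <= 1 -> In xy D ->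
  norm1 dL (fun i => net L d sigma (shrink_fan_out W l j t) (fst xy) i - net L d sigma W (fst xy) i)
    <= t * (K_out l * pnorm p (d (S l)) (W (S l) j) * norm1 (d (pred l)) (fun i => W l i j)).
Proof.
  intros Hd0 HdL HE Hl Hj Ht Hin; rewrite net_diff_norm1 by auto.
  pose proof C_nonneg; assert (HX : 0 <= X_out) by apply input_bound_nonneg.
  assert (Hx : norm_inf (d 0%nat) (fst xy) <= X_out) by (rewrite Hd0; now apply le_input_bound).
  assert (HWb : op_bounded L d norm_inf C W) by (apply (op_bounded_out d W); auto; intros; lra).
  set (c := norm1 (d (pred l)) (fun i => W l i j)).
  assert (Hz : Rabs (preact d sigma W (fst xy) l j) <= act_bound b1 C X_out (pred l) * c).
  { eapply Rle_trans; [apply Rabs_preact_le_norm_inf_norm1|].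
    apply Rmult_le_compat_r; [apply norm1_nonneg|].
    apply (N_layer_le L d sigma b1 b1_nonneg sigma_linear_bound norm_inf Rabs_le_norm_inf
             norm_inf_le_scal C X_out); auto; lia. }
  eapply Rle_trans; [apply norm1_le_norm_inf|].
  replace (INR (d L)) with (INR dL) by now rewrite HdL.
  pose proof (downstream_gain_nonneg L b1 b2 b1_nonneg b2_nonneg C X_out H HX l).
  assert (0 <= b1 l (preact_bound b1 C X_out l)) by (apply b1_nonneg, preact_bound_nonneg; auto).
  apply Rle_trans with (INR dL * (downstream_gain L b1 b2 C X_out l
           * (t * (b1 l (preact_bound b1 C X_out l) * (act_bound b1 C X_out (pred l) * c)))
           * pnorm p (d (S l)) (W (S l) j)));
    [|unfold K_out; right; ring].
  apply Rmult_le_compat_l; [apply pos_INR|].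
  eapply Rle_trans; [apply (N_output_change_fan_out L d sigma b1 b2 b1_nonneg b2_nonneg
     sigma_linear_bound sigma_lipschitz norm_inf norm_inf_nonneg Rabs_le_norm_inf norm_inf_le_scal
     C X_out); auto|].
  - apply (op_bounded_out d W); auto; intros; now apply Rabs_shrink_fan_out_le.
  - apply Rmult_le_compat; try apply norm_inf_nonneg.
    + apply Rmult_le_pos; auto; apply Rmult_le_pos; [lra|].
      apply Rmult_le_pos; auto; apply Rabs_pos.
    + apply Rmult_le_compat_l; auto; apply Rmult_le_compat_l; [lra|].
      apply Rmult_le_compat_l; auto.
    + apply norm_inf_le_pnorm; auto.
Qed.

Lemma fan_out_lower_bound_in :
  exists c : nat -> R, (forall l, 0 < c l) /\
    forall d W, d 0%nat = d0 -> d L = dL -> proper_B_local_min Reg_in L sigma e D lam p B d W ->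
    forall l j, (1 <= l < L)%nat -> (j < d l)%nat -> c l <= norm1 (d (S l)) (W (S l) j).
Proof.
  exists (fun l => lam / ((b3 Sl + 1) * K_in l + 1)); split.
  { intros l; pose proof b3_Sl_nonneg; pose proof (K_in_nonneg l); apply Rdiv_lt_0_compat; nra. }
  intros d W Hd0 HdL (Hmin & HE & Hprop) l j Hl Hj.
  set (P := pnorm p (d (pred l)) (fun i => W l i j)).
  assert (HP : 0 < P) by (apply pnorm_pos; auto; apply (proper_hidden_unit L d W l j); auto).
  apply (unit_lower_bound Reg_in d W (shrink_fan_in W l j) P (K_in l)); auto;
    [apply K_in_nonneg | apply norm1_nonneg | | |].
  - intros t Ht q i k Hq Hi Hk; apply shrink_fan_in_close; auto; lra.
  - intros t Ht; apply Omega_shrink_fan_in; auto; try lia; lra.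
  - intros t Ht xy Hin; apply output_change_shrink_fan_in; auto; lra.
Qed.

Lemma fan_in_lower_bound_out :
  exists c : nat -> R, (forall l, 0 < c l) /\
    forall d W, d 0%nat = d0 -> d L = dL -> proper_B_local_min Reg_out L sigma e D lam p B d W ->
    forall l j, (1 <= l < L)%nat -> (j < d l)%nat -> c l <= norm1 (d (pred l)) (fun i => W l i j).
Proof.
  exists (fun l => lam / ((b3 Sl + 1) * K_out l + 1)); split.
  { intros l; pose proof b3_Sl_nonneg; pose proof (K_out_nonneg l); apply Rdiv_lt_0_compat; nra. }
  intros d W Hd0 HdL (Hmin & HE & Hprop) l j Hl Hj.
  set (P := pnorm p (d (S l)) (W (S l) j)).
  assert (HP : 0 < P) by (apply pnorm_pos; auto; apply (proper_hidden_unit L d W l j); auto).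
  apply (unit_lower_bound Reg_out d W (shrink_fan_out W l j) P (K_out l)); auto;
    [apply K_out_nonneg | apply norm1_nonneg | | |].
  - intros t Ht q i k Hq Hi Hk; apply shrink_fan_out_close; auto; lra.
  - intros t Ht; apply Omega_shrink_fan_out; auto; try lia; lra.
  - intros t Ht xy Hin; apply output_change_shrink_fan_out; auto; lra.
Qed.

Lemma hidden_dims_bounded_in :
  exists M : nat, forall d W, d 0%nat = d0 -> d L = dL ->
    proper_B_local_min Reg_in L sigma e D lam p B d W ->
    forall l, (1 <= l < L)%nat -> (d l <= M)%nat.
Proof.
  destruct fan_out_lower_bound_in as (c & Hc & Hfan).
  destruct (nat_seq_bounded_of_steps L (INR dL)
              (fun k r => r * rpow C p / rpow (c (L - S k)%nat / (r + 1)) p)) as [M HM].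
  exists M; intros d W Hd0 HdL Hmin l Hl.
  replace l with (L - (L - l))%nat by lia.
  apply (HM (fun k => d (L - k)%nat)); [rewrite Nat.sub_0_r, HdL; lra | | lia].
  intros k r Hk Hr; set (l' := (L - S k)%nat); replace (L - k)%nat with (S l') in Hr by lia.
  apply (columns_count_bound (d l') (d (S l')) (fun i j => W (S l') j i) (c l') C p r); auto.
  - intros j Hj; apply (Hfan d W Hd0 HdL Hmin); auto; lia.
  - intros i Hi; destruct Hmin as (_ & HE & _).
    eapply Rle_trans; [|apply (fan_pnorms_le Reg_in d W (S l') HdL HE); lia].
    apply (rsum_term_le (d (S l')) (fun j => pnorm p (d (pred (S l'))) (fun i => W (S l') i j)));
      auto; intros; apply pnorm_nonneg.
Qed.

Lemma hidden_dims_bounded_out :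
  exists M : nat, forall d W, d 0%nat = d0 -> d L = dL ->
    proper_B_local_min Reg_out L sigma e D lam p B d W ->
    forall l, (1 <= l < L)%nat -> (d l <= M)%nat.
Proof.
  destruct fan_in_lower_bound_out as (c & Hc & Hfan).
  destruct (nat_seq_bounded_of_steps L (INR d0)
              (fun k r => r * rpow C p / rpow (c (S k) / (r + 1)) p)) as [M HM].
  exists M; intros d W Hd0 HdL Hmin l Hl.
  apply (HM d); [rewrite Hd0; lra | | lia].
  intros k r Hk Hr.
  apply (columns_count_bound (d (S k)) (d k) (W (S k)) (c (S k)) C p r); auto.
  - intros j Hj; apply (Hfan d W Hd0 HdL Hmin); auto; lia.
  - intros i Hi; destruct Hmin as (_ & HE & _).
    eapply Rle_trans; [|apply (fan_pnorms_le Reg_out d W (S k) HdL HE); lia].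
    apply (rsum_term_le (d (pred (S k))) (fun i => pnorm p (d (S k)) (fun j => W (S k) i j)));
      auto; intros; apply pnorm_nonneg.
Qed.

End Proper_local_minima.

Theorem lemma4
  (L d0 dL : nat) (Y : Type)
  (sigma : nat -> R -> R) (e : (nat -> R) -> Y -> R)
  (D : list ((nat -> R) * Y))
  (b1 b2 : nat -> R -> R) (b3 : R -> R)
  (Hright : forall l s, (1 <= l <= L)%nat -> exists Dr, right_deriv (sigma l) s Dr)
  (Hleft : forall l s, (1 <= l <= L)%nat -> exists Dl, left_deriv (sigma l) s Dl)
  (Hb1 : forall l S, 0 <= S -> 0 <= b1 l S)
  (Hb2 : forall l S, 0 <= S -> 0 <= b2 l S)
  (Hb3 : forall S, 0 <= S -> 0 <= b3 S)
  (Hsig1 : forall l S s, (1 <= l <= L)%nat -> 0 <= S -> Rabs s <= S ->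
             Rabs (sigma l s) <= b1 l S * Rabs s)
  (Hsig2 : forall l S s Ds, (1 <= l <= L)%nat -> 0 <= S -> Rabs s <= S ->
             (left_deriv (sigma l) s Ds \/ right_deriv (sigma l) s Ds) ->
             Rabs Ds <= b2 l S)
  (He_nonneg : forall v y, padded dL v -> 0 <= e v y)
  (He_diff : forall v y, padded dL v -> exists g, is_grad dL e y v g)
  (He_bound : forall S v y g, 0 <= S -> padded dL v -> e v y <= S ->
             is_grad dL e y v g -> forall i, (i < dL)%nat -> Rabs (g i) <= b3 S)
  (k : reg_kind) (lam p : R) (Hlam : 0 < lam) (Hp : 1 <= p)
  (B : R) :
  exists M : nat,
    forall (d : nat -> nat) (W : nat -> nat -> nat -> R),
      d 0%nat = d0 -> d L = dL ->
      proper_B_local_min k L sigma e D lam p B d W ->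
      forall l, (1 <= l < L)%nat -> (d l <= M)%nat.
Proof.
  destruct k.
  - exact (hidden_dims_bounded_in L d0 dL Y sigma e D b1 b2 b3 Hright Hleft Hb1 Hb2 Hb3
             Hsig1 Hsig2 He_nonneg He_diff He_bound lam p B Hlam Hp).
  - exact (hidden_dims_bounded_out L d0 dL Y sigma e D b1 b2 b3 Hright Hleft Hb1 Hb2 Hb3
             Hsig1 Hsig2 He_nonneg He_diff He_bound lam p B Hlam Hp).
Qed.
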